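(* Let $A$ be an associative ring, $n\ge2$, $1\le k\le n-1$, $a\in A$. For any $\omega\in Br_n$ (viewed in $Br_n(A)$ via $y_i\mapsto y_i^0$), the element $\omega\, y_k^a (y_k^0)^{-1}\omega^{-1}\in Br_n(A)$ depends only on the image $\bar\omega$ of $\omega$ in $\mathcal S_n$. Moreover, if $\bar\omega(j)=k$ and $\bar\omega(j+1)=k+1$, then $\omega\, y_k^a (y_k^0)^{-1}\omega^{-1} = y_j^a (y_j^0)^{-1}$.
   Context: $Br_n(A)$ is the group generated by $y_i^a$, $1\le i\le n-1$, $a\in A$, with relations for all $a,b,c\in A$: $y_i^a y_i^0 y_i^b = y_i^0 y_i^0 y_i^{a+b}$; $y_i^a y_j^b = y_j^b y_i^a$ if $|i-j|\ge 2$; $y_i^a y_{i+1}^b y_i^c = y_{i+1}^c y_i^{b+ac} y_{i+1}^a$. $Br_n$ is the Artin braid group (generators $y_i$, relations $y_iy_j=y_jy_i$ for $|i-j|\ge 2$, $y_iy_{i+1}y_i=y_{i+1}y_iy_{i+1}$), identified with the subgroup of $Br_n(A)$ generated by the $y_i^0$; $\bar\omega$ denotes the image of $\omega$ under the surjection $Br_n\to\mathcal S_n$, $y_i\mapsto(i\ i+1)$. *)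

From mathcomp Require Import all_boot all_order all_algebra.
Set Implicit Arguments. Unset Strict Implicit. Unset Printing Implicit Defensive.
Import GRing.Theory.
Local Open Scope ring_scope.

(* A letter of a word in the generators of Br_n(A):
   (i, a, false) is y_i^a and (i, a, true) is (y_i^a)^{-1}.  Indices are 1-based. *)
Definition letter (A : Type) := (nat * A * bool)%type.
Definition word (A : Type) := seq (letter A).

Definition inv_letter (A : Type) (l : letter A) : letter A :=
  let: (i, a, e) := l in (i, a, ~~ e).
Definition inv_word (A : Type) (w : word A) : word A := rev (map (@inv_letter A) w).

Definition y (A : Type) (i : nat) (a : A) : letter A := (i, a, false).
Definition yinv (A : Type) (i : nat) (a : A) : letter A := (i, a, true).

Definition gen_ok (n i : nat) : bool := (1 <= i <= n.-1)%N.

(* Equality in the group Br_n(A) presented by generators y_i^a (1 <= i <= n-1,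
   a in A) and the relations of the paper: the smallest congruence on words
   containing free cancellation and the defining relations. *)
Inductive breq (A : pzRingType) (n : nat) : word A -> word A -> Prop :=
| breq_refl w : breq n w w
| breq_sym u v : breq n u v -> breq n v u
| breq_trans u v w : breq n u v -> breq n v w -> breq n u w
| breq_cat u u' v v' : breq n u u' -> breq n v v' -> breq n (u ++ v) (u' ++ v')
| breq_invr i a : gen_ok n i -> breq n [:: y i a; yinv i a] [::]
| breq_invl i a : gen_ok n i -> breq n [:: yinv i a; y i a] [::]
| breq_rel1 i a b : gen_ok n i ->
    breq n [:: y i a; y i 0; y i b] [:: y i 0; y i 0; y i (a + b)]
| breq_rel2 i j a b : gen_ok n i -> gen_ok n j -> (2 <= `|(i%:Z - j%:Z)|)%N ->
    breq n [:: y i a; y j b] [:: y j b; y i a]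
| breq_rel3 i a b c : gen_ok n i -> gen_ok n i.+1 ->
    breq n [:: y i a; y i.+1 b; y i c] [:: y i.+1 c; y i (b + a * c); y i.+1 a].

(* Words in the Artin generators of Br_n: (i, false) is y_i, (i, true) is y_i^{-1}. *)
Definition bword := seq (nat * bool).
Definition bword_ok (n : nat) (w : bword) : bool := all (fun l => gen_ok n l.1) w.

Definition emb (A : pzRingType) (w : bword) : word A :=
  map (fun l => (l.1, 0 : A, l.2)) w.

Definition swap (i x : nat) : nat :=
  if x == i then i.+1 else if x == i.+1 then i else x.

(* The image \bar\omega in S_n, as a map on {1..n}: the image of y_i is (i i+1),
   and products follow the convention (s t)(x) = t (s x) (as for mathcomp perms),
   i.e. the word y_{i1} ... y_{ir} acts by applying (i1 i1+1) first. *)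
Definition bar (w : bword) : nat -> nat :=
  foldl (fun f l => fun x => swap l.1 (f x)) id w.

Definition conjk (A : pzRingType) (w : bword) (k : nat) (a : A) : word A :=
  emb A w ++ [:: y k a; yinv k 0] ++ inv_word (emb A w).
Arguments emb A w : clear implicits.
Arguments conjk A w k a : clear implicits.

(* Write s_i := y_i^0 and x_i := y_i^a (y_i^0)^-1, and conjugate on the right,
   u ^ g = g^-1 u g.  For distinct p, q in {1, ..., n} put
     phi p q := x_p ^ (s_(p+1) ... s_(q-1))     if p < q,
     phi p q := x_q ^ (s_q s_(q+1) ... s_(p-1))  if q < p,
   so that phi k (k+1) = x_k.  The defining relations for adjacent indices show that
   conjugation by s_i acts on phi through the transposition (i i+1) applied to both
   arguments.  Hence omega x_k omega^-1 = phi p q, where (p, q) is the preimage of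
   (k, k+1) under the permutation of omega: it depends only on that permutation, and
   it is x_j when (p, q) = (j, j+1).  This is checked in any group containing elements
   that satisfy the relations, and applied to Br_n(A) realised as the group of
   breq-classes of words. *)

From HB Require Import structures.
From mathcomp Require Import all_boot all_order all_algebra zify boolp.
Set Implicit Arguments. Unset Strict Implicit. Unset Printing Implicit Defensive.
Import GRing.Theory.

Ltac gen_lia := unfold gen_ok in *; lia.

Section ConjugationFacts.
Variable G : groupType.
Local Open Scope group_scope.
Implicit Types g h u v w : G.

Lemma conjg_mul_eq u g v : u * g = g * v -> u ^ g = v.
Proof. by move=> e; apply: (mulgI g); rewrite -conjgC. Qed.

Lemma conjg_commute u g : commute u g -> u ^ g = u.
Proof. by move/commgP/conjg_fixP. Qed.

Lemma conjg_swap u g h : commute g h -> (u ^ g) ^ h = (u ^ h) ^ g.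
Proof. by move=> gh; rewrite -!conjgM gh. Qed.

Lemma conjg_fixV u g : u ^ g = u -> u ^ g^-1 = u.
Proof. by move=> ug; rewrite -{1}ug conjgK. Qed.

Lemma braid_mul_sqr g h : g * h * g = h * g * h -> g * (h * h) = h^-1 * (g * g) * h * g.
Proof.
move=> e; apply: (mulgI h); rewrite !mulgA mulgV mul1g -e.
by rewrite -!mulgA [g * (h * g)]mulgA e !mulgA.
Qed.

Lemma braid_conj_sqr u g h : g * h * g = h * g * h ->
  u ^ h = u -> u ^ (g * g) = u -> (u ^ g) ^ (h * h) = u ^ g.
Proof.
by move=> e uh ugg; rewrite -conjgM braid_mul_sqr // 3!conjgM conjg_fixV // ugg uh.
Qed.

Lemma braid_conj_fix u g h : g * h * g = h * g * h -> u ^ h = u ->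
  ((u ^ g) ^ h) ^ g = (u ^ g) ^ h.
Proof. by move=> e uh; rewrite -!conjgM mulgA e !conjgM uh. Qed.

End ConjugationFacts.

Lemma swapK i : involutive (swap i).
Proof. by move=> p; rewrite /swap; do 4?case: eqP => //=; lia. Qed.

Lemma swap_id i p : p != i -> p != i.+1 -> swap i p = p.
Proof. by rewrite /swap => /negbTE -> /negbTE ->. Qed.

Lemma swap_l i : swap i i = i.+1.
Proof. by rewrite /swap eqxx. Qed.

Lemma swap_r i : swap i i.+1 = i.
Proof. by rewrite /swap eqn_leq ltnn eqxx. Qed.

Lemma swap_lt i p q : p < q -> ~~ ((i == p) && (q == p.+1)) -> swap i p < swap i q.
Proof.
move=> lt_pq h; have {}h : ~ (i = p /\ q = p.+1) by move=> [ei eq]; rewrite ei eq !eqxx in h.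
by rewrite /swap; do 4?case: eqP => /= ?; lia.
Qed.

Lemma swap_range n i p : gen_ok n i -> 0 < p <= n -> 0 < swap i p <= n.
Proof. by move=> hi hp; rewrite /swap; do 2?case: eqP => /= ?; gen_lia. Qed.

Lemma bar_cons l w p : bar (l :: w) p = bar w (swap l.1 p).
Proof.
rewrite /bar /=; move: (swap l.1) => f.
by elim: w f p => //= l' w IH f p; rewrite IH [in RHS]IH.
Qed.

Lemma bar_out n w p : bword_ok n w -> (p == 0) || (n < p) -> bar w p = p.
Proof.
elim: w p => //= l w IH p /andP[hl hw] hp.
by rewrite bar_cons swap_id ?IH //; gen_lia.
Qed.

Lemma bar_preimage_range n w p : bword_ok n w -> 0 < bar w p <= n -> 0 < p <= n.
Proof. by move=> hw; case: (boolP ((p == 0) || (n < p))) => [/(bar_out hw) ->|]; lia. Qed.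

Lemma bar_surj w q : exists p, bar w p = q.
Proof.
elim: w q => [|l w IH] q; first by exists q.
by have [p <-] := IH q; exists (swap l.1 p); rewrite bar_cons swapK.
Qed.

Section BraidConjugates.
Variables (A : pzRingType) (G : groupType) (n : nat) (Y : nat -> A -> G).
Local Open Scope group_scope.

Hypothesis Y_rel1 : forall i b c, gen_ok n i ->
  Y i b * Y i 0%R * Y i c = Y i 0%R * Y i 0%R * Y i (b + c)%R.
Hypothesis Y_rel2 : forall i j b c, gen_ok n i -> gen_ok n j -> (i.+1 < j)%N ->
  commute (Y i b) (Y j c).
Hypothesis Y_rel3 : forall i b c d, gen_ok n i -> gen_ok n i.+1 ->
  Y i b * Y i.+1 c * Y i d = Y i.+1 d * Y i (c + b * d)%R * Y i.+1 b.

Variable a : A.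

Definition s i := Y i 0%R.
Definition x i := Y i a * (s i)^-1.

Lemma Y_commute_far i j b c : gen_ok n i -> gen_ok n j -> (i.+1 < j) || (j.+1 < i) ->
  commute (Y i b) (Y j c).
Proof. by move=> hi hj /orP[] ?; [apply: Y_rel2 | apply/commute_sym/Y_rel2]. Qed.

Lemma s_braid i : gen_ok n i -> gen_ok n i.+1 -> s i * s i.+1 * s i = s i.+1 * s i * s i.+1.
Proof. by move=> hi hi1; rewrite /s Y_rel3 // mulr0 addr0. Qed.

Lemma x_fix_far i j : gen_ok n i -> gen_ok n j -> (i.+1 < j) || (j.+1 < i) -> x j ^ s i = x j.
Proof.
move=> hi hj far; apply/conjg_commute/commute_sym.
by apply: commuteM; last apply: commuteV; apply: Y_commute_far.
Qed.

Section Adjacent.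
Variable i : nat.
Hypotheses (hi : gen_ok n i) (hi1 : gen_ok n i.+1).

Lemma x_conj_up : x i ^ (s i.+1 * s i) = x i.+1.
Proof.
have := Y_rel3 a 0%R 0%R hi hi1; rewrite mulr0 addr0 => e.
rewrite /x conjMg conjVg; congr (_ * _^-1); apply: conjg_mul_eq.
  by rewrite /s mulgA e.
by rewrite mulgA s_braid.
Qed.

Lemma x_conj_down : x i.+1 ^ (s i * s i.+1) = x i.
Proof.
have := Y_rel3 0%R 0%R a hi hi1; rewrite mul0r addr0 => e.
rewrite /x conjMg conjVg; congr (_ * _^-1); apply: conjg_mul_eq.
  by rewrite /s mulgA e.
by rewrite mulgA -s_braid.
Qed.

Lemma x_conj_sqr : x i ^ (s i * s i) = x i.
Proof.
have := Y_rel1 a 0%R hi; rewrite addr0 => e.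
rewrite /x conjMg conjVg; congr (_ * _^-1); last first.
  by apply/conjg_commute/commuteM.
by apply: conjg_mul_eq; rewrite /s mulgA e.
Qed.

Lemma x_conj_sqr_up : x i ^ (s i.+1 * s i.+1) = x i.
Proof.
have xV : x i.+1 ^ (s i)^-1 = x i ^ (s i.+1)^-1.
  have := Y_rel3 0%R a 0%R hi hi1; rewrite mulr0 addr0 => e.
  apply: (mulIg (s i * s i.+1 * s i)); rewrite {2}s_braid // /x !conjgE !invgK.
  by rewrite !mulgA !mulgVK /s e.
by rewrite conjgM -(conjgK (s i) (x i ^ _)) -(conjgM (x i)) x_conj_up xV conjgKV.
Qed.

Lemma x_conj_cross : x i.+1 ^ s i = x i ^ s i.+1.
Proof.
rewrite -[x i.+1 ^ s i](conjgK (s i.+1)) -(conjgM (x i.+1)) x_conj_down.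
by rewrite -[in LHS]x_conj_sqr_up conjgM conjgK.
Qed.

Lemma xs_conj_cross : (x i.+1 ^ s i.+1) ^ s i = (x i ^ s i) ^ s i.+1.
Proof.
rewrite -x_conj_up -!conjgM mulgA -s_braid // -!mulgA.
rewrite (braid_mul_sqr (esym (s_braid hi hi1))) !mulgA mulgV mul1g.
by rewrite -(mulgA (s i.+1 * s i.+1)) [LHS]conjgM x_conj_sqr_up.
Qed.

End Adjacent.

Definition sprod i j := \prod_(i <= t < j) s t.

Lemma sprod_rcons i j : (i <= j)%N -> sprod i j.+1 = sprod i j * s j.
Proof. exact: big_nat_recr. Qed.

Lemma sprod_cons i j : (i < j)%N -> sprod i j = s i * sprod i.+1 j.
Proof. exact: big_ltn. Qed.

Lemma sprod_cat i j k : (i <= j <= k)%N -> sprod i k = sprod i j * sprod j k.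
Proof. by case/andP=> ij jk; exact: big_cat_nat. Qed.

Lemma sprod_nil i : sprod i i = 1.
Proof. exact: big_geq. Qed.

Lemma sprod_commute i j k : (0 < i)%N -> (j <= n)%N -> gen_ok n k ->
  (k.+1 < i) || (j < k) -> commute (sprod i j) (s k).
Proof.
move=> hi hj hk far; apply/commute_sym; rewrite /sprod big_seq.
apply: commute_prod => t; rewrite mem_index_iota => ht.
by apply: Y_commute_far => //; gen_lia.
Qed.

Definition xhead (b : bool) m := if b then x m else x m ^ s m.

Lemma xhead_fix_far b m i : gen_ok n m -> gen_ok n i -> (i.+1 < m) || (m.+1 < i) ->
  xhead b m ^ s i = xhead b m.
Proof.
move=> hm hi far; rewrite /xhead; case: b; first exact: x_fix_far.
by rewrite conjg_swap ?(x_fix_far hi) //; apply: (@Y_commute_far m i); gen_lia.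
Qed.

Section Head.
Variables (b : bool) (m : nat).
Hypotheses (hm : gen_ok n m) (hm1 : gen_ok n m.+1).

Lemma xhead_flip : xhead b m ^ s m = xhead (~~ b) m.
Proof. by case: b; rewrite //= -conjgM x_conj_sqr. Qed.

Lemma xhead_conj_sqr : xhead b m ^ (s m.+1 * s m.+1) = xhead b m.
Proof.
case: b; rewrite /xhead ?x_conj_sqr_up // conjgM -xs_conj_cross //.
by rewrite -!conjgM mulgA -s_braid // conjgM x_conj_down.
Qed.

Lemma xhead_conj_next : xhead b m ^ (s m.+1 * s m) = xhead b m.+1.
Proof.
case: b; rewrite /xhead ?x_conj_up //.
by rewrite -conjgM mulgA s_braid // conjgM x_conj_up.
Qed.

Lemma xhead_conj_prev : xhead b m.+1 ^ s m = xhead b m ^ s m.+1.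
Proof. by case: b; rewrite /xhead ?x_conj_cross ?xs_conj_cross. Qed.

End Head.

Definition xconj b m M := xhead b m ^ sprod m.+1 M.

Lemma xconj_succ b m : xconj b m m.+1 = xhead b m.
Proof. by rewrite /xconj sprod_nil conjg1. Qed.

Section ConjugateByGenerator.
Variable b : bool.

Lemma xconj_fix_far m M i : (0 < m < M)%N -> (M <= n)%N -> gen_ok n i ->
  (i.+1 < m) || (M < i) -> xconj b m M ^ s i = xconj b m M.
Proof.
move=> hmM hM hi far; rewrite /xconj conjg_swap ?xhead_fix_far //; try gen_lia.
by apply: sprod_commute => //; lia.
Qed.

Lemma xconj_conj_last m M : (0 < m < M)%N -> (M < n)%N -> xconj b m M ^ s M = xconj b m M.+1.
Proof. by move=> hmM hM; rewrite /xconj sprod_rcons ?conjgM //; lia. Qed.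

Lemma xconj_conj_sqr m j : (0 < m < j)%N -> (j < n)%N -> xconj b m j ^ (s j * s j) = xconj b m j.
Proof.
elim: j => [|j IH] hmj hjn; first lia.
have [ltmj|<-] : (m < j)%N \/ m = j by lia.
  rewrite -xconj_conj_last; try lia.
  apply: braid_conj_sqr; first by rewrite s_braid //; gen_lia.
    by apply: xconj_fix_far; gen_lia.
  by apply: IH; lia.
by rewrite xconj_succ xhead_conj_sqr //; gen_lia.
Qed.

Lemma xconj_conj_inner m M i : (0 < m < i)%N -> (i.+2 <= M <= n)%N ->
  xconj b m M ^ s i = xconj b m M.
Proof.
move=> hmi hiM.
have e : sprod m.+1 M = sprod m.+1 i * (s i * s i.+1) * sprod i.+2 M.
  rewrite (@sprod_cat m.+1 i) ?(@sprod_cat i i.+2 M) 1?mulgA; try lia.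
  by rewrite /sprod !big_nat_recl // big_geq // mulg1.
rewrite /xconj e !conjgM -/(xconj b m i) conjg_swap; last first.
  by apply: sprod_commute => //; gen_lia.
congr (_ ^ _); apply: braid_conj_fix; first by rewrite s_braid //; gen_lia.
by apply: xconj_fix_far; gen_lia.
Qed.

Lemma xconj_conj_first m M : (0 < m)%N -> (m.+1 < M <= n)%N ->
  xconj b m M ^ s m = xconj b m.+1 M.
Proof.
move=> hm hmM; have lt_m1M : (m.+1 < M)%N by lia.
rewrite /xconj (sprod_cons lt_m1M) conjgM conjg_swap; last first.
  by apply: sprod_commute => //; gen_lia.
by rewrite -(conjgM (xhead b m)) xhead_conj_next //; gen_lia.
Qed.

Lemma xconj_conj_before i M : (0 < i)%N -> (i.+1 < M <= n)%N ->
  xconj b i.+1 M ^ s i = xconj b i M.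
Proof.
move=> hi hiM; rewrite /xconj conjg_swap; last first.
  by apply: sprod_commute => //; gen_lia.
by rewrite xhead_conj_prev -?conjgM -?sprod_cons //; gen_lia.
Qed.

Lemma xconj_conj m M i : (0 < m < M)%N -> (M <= n)%N -> gen_ok n i ->
  xconj b m M ^ s i =
  if (i == m) && (M == m.+1) then xconj (~~ b) m M else xconj b (swap i m) (swap i M).
Proof.
move=> hmM hM hi; case: ifP => [/andP[/eqP-> /eqP->]|flip].
  by rewrite !xconj_succ xhead_flip //; gen_lia.
have {}flip : ~ (i = m /\ M = m.+1) by move=> [ei eM]; rewrite ei eM !eqxx in flip.
have : ((i.+1 < m) || (M < i)) \/ i = M \/ (i.+1 = M /\ m < i) \/
    (m < i /\ i.+2 <= M) \/ i.+1 = m \/ (i = m /\ m.+1 < M) by gen_lia.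
case=> [far|[eM|[[eM lt_mi]|[[lt_mi le_iM]|[em|[em lt_m1M]]]]]].
- by rewrite !swap_id ?xconj_fix_far //; apply/eqP; lia.
- subst i; rewrite swap_l swap_id ?xconj_conj_last //; try (apply/eqP; lia); gen_lia.
- subst M; rewrite swap_r swap_id; try (apply/eqP; lia).
  by rewrite -xconj_conj_last -?(conjgM (xconj b m i)) ?xconj_conj_sqr //; gen_lia.
- by rewrite !swap_id ?xconj_conj_inner //; try (apply/eqP; lia); lia.
- subst m; rewrite swap_r swap_id ?xconj_conj_before //; try (apply/eqP; lia); gen_lia.
- subst m; rewrite swap_l swap_id ?xconj_conj_first //; try (apply/eqP; lia); gen_lia.
Qed.

End ConjugateByGenerator.

Definition phi p q := if (p < q)%N then xconj true p q else xconj false q p.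

Lemma phi_succ k : phi k k.+1 = x k.
Proof. by rewrite /phi ltnSn xconj_succ. Qed.

Lemma phi_conj p q i : (0 < p <= n)%N -> (0 < q <= n)%N -> p != q -> gen_ok n i ->
  phi p q ^ s i = phi (swap i p) (swap i q).
Proof.
move=> hp hq hpq hi; rewrite [phi p q]/phi.
case: (ltngtP p q) => [lt_pq|lt_qp|eq_pq]; last by move: hpq; rewrite eq_pq eqxx.
  rewrite xconj_conj //; try lia.
  case: ifP => [/andP[/eqP-> /eqP->]|flip].
    by rewrite swap_l swap_r /phi ltnNge leqnSn.
  by rewrite /phi swap_lt ?flip.
rewrite xconj_conj //; try lia.
case: ifP => [/andP[/eqP-> /eqP->]|flip].
  by rewrite swap_l swap_r /phi ltnSn.
by rewrite /phi ltnNge ltnW ?swap_lt ?flip.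
Qed.

Lemma phi_conjV p q i : (0 < p <= n)%N -> (0 < q <= n)%N -> p != q -> gen_ok n i ->
  phi p q ^ (s i)^-1 = phi (swap i p) (swap i q).
Proof.
move=> hp hq hpq hi; apply: (canLR (conjgK (s i))).
by rewrite phi_conj ?swapK ?swap_range // (inj_eq (can_inj (swapK i))).
Qed.

Definition sword (w : bword) := \prod_(l <- w) (if l.2 then (s l.1)^-1 else s l.1).

Lemma phi_conj_sword w p q : bword_ok n w -> (0 < p <= n)%N -> (0 < q <= n)%N -> p != q ->
  phi p q ^ sword w = phi (bar w p) (bar w q).
Proof.
elim: w p q => [|l w IH] p q; first by rewrite /sword big_nil conjg1.
case/andP=> hl hw hp hq hpq; rewrite /sword big_cons conjgM -/(sword w) !bar_cons.
rewrite (_ : phi p q ^ _ = phi (swap l.1 p) (swap l.1 q)); last first.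
  by case: l.2; [apply: phi_conjV | apply: phi_conj].
by rewrite IH ?swap_range // (inj_eq (can_inj (swapK l.1))).
Qed.

Lemma x_conj_sword w k p q : bword_ok n w -> gen_ok n k -> bar w p = k -> bar w q = k.+1 ->
  x k ^ (sword w)^-1 = phi p q.
Proof.
move=> hw hk hp hq.
have rp : (0 < p <= n)%N by apply: (bar_preimage_range hw); rewrite hp; gen_lia.
have rq : (0 < q <= n)%N by apply: (bar_preimage_range hw); rewrite hq; gen_lia.
have pq : p != q by apply/eqP => epq; move: hp; rewrite epq hq; lia.
by rewrite -phi_succ -hq -hp -phi_conj_sword ?conjgK.
Qed.

End BraidConjugates.

Definition word_ok (A : Type) (n : nat) (w : word A) : bool :=
  all (fun l : letter A => gen_ok n l.1.1) w.

Record brclass (A : pzRingType) (n : nat) := BrClass {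
  brclass_pred : word A -> Prop;
  brclass_repr : exists w, word_ok n w /\ brclass_pred = breq n w }.

HB.instance Definition _ A n := gen_eqMixin (brclass A n).
HB.instance Definition _ A n := gen_choiceMixin (brclass A n).

Section PresentedGroup.
Variables (A : pzRingType) (n : nat).
Implicit Types (u v w : word A) (X Z : brclass A n).

Lemma word_ok_cat u v : word_ok n (u ++ v) = word_ok n u && word_ok n v.
Proof. exact: all_cat. Qed.

Lemma word_ok_inv w : word_ok n (inv_word w) = word_ok n w.
Proof. by rewrite /word_ok /inv_word all_rev all_map; apply: eq_all => -[[]]. Qed.

Lemma breq_catl u v v' : breq n v v' -> breq n (u ++ v) (u ++ v').
Proof. by move/(breq_cat (breq_refl n u)). Qed.

Lemma breq_catr u u' v : breq n u u' -> breq n (u ++ v) (u' ++ v).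
Proof. by move=> e; apply: breq_cat e (breq_refl n v). Qed.

Lemma breq_letter_inv (l : letter A) : gen_ok n l.1.1 ->
  breq n [:: l; inv_letter l] [::] /\ breq n [:: inv_letter l; l] [::].
Proof.
by case: l => [[i b] []] hi; split;
  [apply: breq_invl | apply: breq_invr | apply: breq_invr | apply: breq_invl].
Qed.

Lemma breq_inv_wordl w : word_ok n w -> breq n (inv_word w ++ w) [::].
Proof.
elim: w => [|l w IH] /=; first by move=> _; apply: breq_refl.
case/andP=> hl /IH hw; rewrite /inv_word /= rev_cons -cats1 -/(inv_word w) -catA.
apply: breq_trans hw; apply: breq_catl.
by rewrite -[w in X in breq _ _ X]cat0s; apply: breq_catr (breq_letter_inv hl).2.
Qed.

Lemma breq_inv_wordr w : word_ok n w -> breq n (w ++ inv_word w) [::].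
Proof.
elim: w => [|l w IH] /=; first by move=> _; apply: breq_refl.
case/andP=> hl /IH hw; rewrite /inv_word /= rev_cons -cats1 -/(inv_word w).
apply: breq_trans (breq_letter_inv hl).1.
rewrite -cat1s [w ++ _]catA (_ : [:: l; inv_letter l] = [:: l] ++ [::] ++ [:: inv_letter l]) //.
by apply: breq_catl; apply: breq_catr.
Qed.

Lemma breq_pred u v : breq n u v -> breq n u = breq n v.
Proof.
move=> e; apply: funext => t; apply: propext.
by split; [apply: breq_trans (breq_sym e) | apply: breq_trans e].
Qed.

(* breq has no cancellation law for letters of index outside 1..n-1, so brcl drops
   them; it is only applied to words without such letters. *)
Definition ok_part w := filter (fun l : letter A => gen_ok n l.1.1) w.

Definition brcl w : brclass A n :=
  BrClass (ex_intro _ (ok_part w) (conj (filter_all _ w) erefl)).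

Lemma brcl_pred w : word_ok n w -> brclass_pred (brcl w) = breq n w.
Proof. by move=> hw; rewrite /= /ok_part (all_filterP hw). Qed.

Definition brrep X : word A := sval (cid (brclass_repr X)).

Lemma brrep_ok X : word_ok n (brrep X).
Proof. exact: (svalP (cid (brclass_repr X))).1. Qed.

Lemma brclass_eq X Z : brclass_pred X = brclass_pred Z -> X = Z.
Proof.
case: X Z => P hP [Q hQ] /= ePQ; subst Q.
by rewrite (Prop_irrelevance hP hQ).
Qed.

Lemma brclK X : brcl (brrep X) = X.
Proof.
apply: brclass_eq; have [ok_rep ->] := svalP (cid (brclass_repr X)).
exact: brcl_pred.
Qed.

Lemma brclP u v : word_ok n u -> word_ok n v -> brcl u = brcl v <-> breq n u v.
Proof.
move=> hu hv; split => [/(congr1 (@brclass_pred A n))|/breq_pred e]; last first.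
  by apply: brclass_eq; rewrite !brcl_pred.
by rewrite !brcl_pred // => ->; apply: breq_refl.
Qed.

Definition brmul X Z := brcl (brrep X ++ brrep Z).
Definition brinv X := brcl (inv_word (brrep X)).
Definition brone := brcl [::].

Lemma brmul_cl u v : word_ok n u -> word_ok n v -> brmul (brcl u) (brcl v) = brcl (u ++ v).
Proof.
move=> hu hv; apply/brclP; rewrite ?word_ok_cat ?brrep_ok ?hu ?hv //.
by apply: breq_cat; apply/brclP; rewrite ?brrep_ok ?brclK.
Qed.

Lemma brmulA : associative brmul.
Proof.
move=> X Y Z; rewrite -[X]brclK -[Y]brclK -[Z]brclK.
by rewrite !brmul_cl ?word_ok_cat ?brrep_ok // catA.
Qed.

Lemma brmul1l : left_id brone brmul.
Proof. by move=> X; rewrite -[X]brclK brmul_cl ?brrep_ok. Qed.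

Lemma brmul1r : right_id brone brmul.
Proof. by move=> X; rewrite -[X]brclK brmul_cl ?brrep_ok // cats0. Qed.

Lemma brmulVl : left_inverse brone brinv brmul.
Proof.
move=> X; rewrite /brinv -{2}[X]brclK brmul_cl ?word_ok_inv ?brrep_ok //.
by apply/brclP; rewrite ?word_ok_cat ?word_ok_inv ?brrep_ok //; apply: breq_inv_wordl (brrep_ok X).
Qed.

Lemma brmulVr : right_inverse brone brinv brmul.
Proof.
move=> X; rewrite /brinv -{1}[X]brclK brmul_cl ?word_ok_inv ?brrep_ok //.
by apply/brclP; rewrite ?word_ok_cat ?word_ok_inv ?brrep_ok //; apply: breq_inv_wordr (brrep_ok X).
Qed.

End PresentedGroup.

HB.instance Definition _ A n :=
  isGroup.Build (brclass A n) (@brmulA A n) (@brmul1l A n) (@brmul1r A n)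
    (@brmulVl A n) (@brmulVr A n).

Section Presentation.
Variables (A : pzRingType) (n : nat).
Local Open Scope group_scope.
Implicit Types (u v w : word A).

Lemma brcl_cat u v : word_ok n u -> word_ok n v -> brcl n u * brcl n v = brcl n (u ++ v).
Proof. exact: brmul_cl. Qed.

Lemma brcl_inv_word w : word_ok n w -> brcl n (inv_word w) = (brcl n w)^-1.
Proof.
move=> hw; apply/esym/mulg1_eq; rewrite brcl_cat ?word_ok_inv //.
by apply/brclP; rewrite ?word_ok_cat ?word_ok_inv ?hw //; apply: breq_inv_wordr.
Qed.

Definition ygen i (b : A) : brclass A n := brcl n [:: y i b].

Lemma word_ok1 i (b : A) (e : bool) : word_ok n [:: (i, b, e)] = gen_ok n i.
Proof. by rewrite /word_ok /= andbT. Qed.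

Lemma ygen_rel1 i b c : gen_ok n i ->
  ygen i b * ygen i 0%R * ygen i c = ygen i 0%R * ygen i 0%R * ygen i (b + c)%R.
Proof.
move=> hi; rewrite /ygen !brcl_cat ?word_ok_cat ?word_ok1 ?hi //.
by apply/brclP; rewrite ?word_ok_cat ?word_ok1 ?hi //; apply: breq_rel1.
Qed.

Lemma ygen_rel2 i j b c : gen_ok n i -> gen_ok n j -> (i.+1 < j)%N ->
  commute (ygen i b) (ygen j c).
Proof.
move=> hi hj lt_ij; rewrite /commute /ygen !brcl_cat ?word_ok1 //.
by apply/brclP; rewrite ?word_ok_cat ?word_ok1 ?hi ?hj //; apply: breq_rel2 => //; lia.
Qed.

Lemma ygen_rel3 i b c d : gen_ok n i -> gen_ok n i.+1 ->
  ygen i b * ygen i.+1 c * ygen i d = ygen i.+1 d * ygen i (c + b * d)%R * ygen i.+1 b.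
Proof.
move=> hi hi1; rewrite /ygen !brcl_cat ?word_ok_cat ?word_ok1 ?hi ?hi1 //.
by apply/brclP; rewrite ?word_ok_cat ?word_ok1 ?hi ?hi1 //; apply: breq_rel3.
Qed.

Lemma word_ok_emb (w : bword) : bword_ok n w -> word_ok n (emb A w).
Proof. by rewrite /word_ok /emb all_map. Qed.

Lemma brcl_emb (w : bword) : bword_ok n w -> brcl n (emb A w) = sword ygen w.
Proof.
elim: w => [|[i e] w IH] /=; first by rewrite /sword big_nil.
case/andP=> hi hw; rewrite /sword big_cons -/(sword ygen w) -IH //.
rewrite -cat1s -brcl_cat ?word_ok1 ?word_ok_emb //.
by case: e; rewrite // -(brcl_inv_word (w := [:: y i 0%R])) ?word_ok1.
Qed.

Lemma word_ok_x k (a b : A) : gen_ok n k -> word_ok n [:: y k a; yinv k b].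
Proof. by rewrite /word_ok /= andbT => ->. Qed.

Lemma brcl_x k (a : A) : gen_ok n k -> brcl n [:: y k a; yinv k 0%R] = x ygen a k.
Proof. by move=> hk; rewrite /x /s /ygen -brcl_inv_word ?brcl_cat ?word_ok1. Qed.

Lemma brcl_conjk (w : bword) k (a : A) : bword_ok n w -> gen_ok n k ->
  brcl n (conjk A w k a) = x ygen a k ^ (sword ygen w)^-1.
Proof.
move=> hw hk.
rewrite /conjk -!brcl_cat ?word_ok_cat ?word_ok_inv ?word_ok_emb ?word_ok_x //.
by rewrite brcl_x // brcl_inv_word ?word_ok_emb // brcl_emb // conjgE invgK mulgA.
Qed.

Lemma conjk_ok (w : bword) k (a : A) : bword_ok n w -> gen_ok n k -> word_ok n (conjk A w k a).
Proof.
by move=> hw hk; rewrite /conjk !word_ok_cat word_ok_inv word_ok_emb //= hk.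
Qed.

End Presentation.

Local Open Scope ring_scope.

Theorem proposition2p4 (A : pzRingType) (n k : nat) (a : A) :
  (2 <= n)%N -> gen_ok n k ->
  (forall w1 w2 : bword, bword_ok n w1 -> bword_ok n w2 ->
      (forall x : nat, bar w1 x = bar w2 x) ->
      breq n (conjk A w1 k a) (conjk A w2 k a)) /\
  (forall (w : bword) (j : nat), bword_ok n w -> gen_ok n j ->
      bar w j = k -> bar w j.+1 = k.+1 ->
      breq n (conjk A w k a) [:: y j a; yinv j 0]).
Proof.
move=> _ hk; have x_conj := x_conj_sword (@ygen_rel1 A n) (@ygen_rel2 A n) (@ygen_rel3 A n) a.
split=> [w1 w2 hw1 hw2 bar12 | w j hw hj hjk hj1k].
  have [p hp] := bar_surj w1 k; have [q hq] := bar_surj w1 k.+1.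
  apply/brclP; rewrite ?conjk_ok // !brcl_conjk // (x_conj w1 k p q) //.
  by rewrite (x_conj w2 k p q) // -bar12.
apply/brclP; rewrite ?conjk_ok ?word_ok_x //.
by rewrite brcl_conjk // (x_conj w k j j.+1) // phi_succ brcl_x.
Qed.
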